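(* Let $n\ge 2$, $t\ge 1$ be integers and $q$ a prime power, and let $\mathcal{D}$ be the Desarguesian $(t-1)$-spread of $\mathrm{PG}(nt-1,q)$. Let $B$ be a minimal blocking set with respect to the hyperplanes of $\mathrm{PG}(n-1,q^t)$. Then there exists a minimal blocking set $B'$ with respect to $(nt-t-1)$-dimensional subspaces of $\mathrm{PG}(nt-1,q)$ such that $B=\mathcal{B}(B')$.
   Context: Field reduction: each point of $\mathrm{PG}(n-1,q^t)$ is a $1$-dimensional $\mathbb{F}_{q^t}$-subspace of $\mathbb{F}_{q^t}^n$, hence a $t$-dimensional $\mathbb{F}_q$-subspace of $\mathbb{F}_q^{nt}$, i.e. a $(t-1)$-dimensional subspace of $\mathrm{PG}(nt-1,q)$; the set $\mathcal{D}$ of these $(t-1)$-spaces partitions the points of $\mathrm{PG}(nt-1,q)$ (the Desarguesian $(t-1)$-spread). For $U\subseteq\mathrm{PG}(nt-1,q)$, $\mathcal{B}(U)$ is the set of elements of $\mathcal{D}$ meeting $U$, identified with the corresponding points of $\mathrm{PG}(n-1,q^t)$. A blocking set with respect to $j$-spaces is a point set meeting every $j$-dimensional subspace; minimal means no proper subset is such a blocking set. *)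

From HB Require Import structures.
From mathcomp Require Import all_boot all_order all_algebra all_field.
Set Implicit Arguments. Unset Strict Implicit. Unset Printing Implicit Defensive.
Import GRing.Theory.
Local Open Scope ring_scope.

(* Projective geometry PG(V) of a finite-dimensional vector space V over K:
   projective points = 1-dimensional subspaces, projective j-spaces =
   (j+1)-dimensional subspaces. *)
Section PG.
Variables (K : fieldType) (vT : vectType K).

Definition is_point (P : {vspace vT}) : Prop := \dim P = 1%N.

Definition blocking_set (B : {vspace vT} -> Prop) (d : nat) : Prop :=
  (forall P, B P -> is_point P) /\
  (forall S : {vspace vT}, \dim S = d -> exists P, B P /\ (P <= S)%VS).

Definition minimal_blocking_set (B : {vspace vT} -> Prop) (d : nat) : Prop :=
  blocking_set B d /\
  (forall B' : {vspace vT} -> Prop, (forall P, B' P -> B P) ->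
      blocking_set B' d -> forall P, B P -> B' P).
End PG.

(* L is an extension of degree t = \dim {:L} of the finite
   field F.  The ambient space L^n is viewed both as an L-vector space
   (VL n, giving PG(n-1,q^t)) and as an F-vector space (VF n, of dimension nt,
   giving PG(nt-1,q)); both have the same carrier {ffun 'I_n -> L}. *)
Section FieldReduction.
Variables (F : finFieldType) (L : fieldExtType F).

Definition VF (n : nat) := {ffun 'I_n -> L}.
Definition VL (n : nat) := {ffun 'I_n -> L^o}.

(* The Desarguesian spread element corresponding to an L-point P of VL n is
   P itself viewed as a (t-dimensional) F-subspace.  B(U) is the set of
   L-points whose spread element meets (shares a nonzero vector with) some
   point of U. *)
Definition field_red_B (n : nat) (U : {vspace VF n} -> Prop)
    (P : {vspace VL n}) : Prop :=
  is_point P /\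
  exists P' : {vspace VF n}, U P' /\
    exists v : VF n, v != 0 /\ v \in P' /\ ((v : VL n) \in P).
End FieldReduction.

From HB Require Import structures.
From mathcomp Require Import all_boot all_order all_algebra all_field.
From mathcomp Require Import zify boolp.
Set Implicit Arguments. Unset Strict Implicit. Unset Printing Implicit Defensive.
Import GRing.Theory.
Local Open Scope ring_scope.

(* Let [B0] be the set of F-points lying in the spread elements of the points
   of [B].  An (nt-t)-space [S] lies in a hyperplane [Z]; the largest
   L-subspace of [Z] is an intersection of [t] F-hyperplanes, so it contains
   (the spread image of) an L-hyperplane [H].  The point of [B] in [H] gives a
   t-space inside [Z], which meets [S] by a dimension count.  Hence [B0], and
   any minimal blocking [B'] inside it, blocks the (nt-t)-spaces.
   Conversely B(B') is contained in [B], and it blocks the L-hyperplanes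
   because their spread images are (nt-t)-spaces; minimality of [B] gives
   B = B(B'). *)

Section Subspaces.
Variables (K : fieldType) (vT : vectType K).
Implicit Types U V W : {vspace vT}.

Lemma dimv_add_line_notin U w : w \notin U -> \dim (U + <[w]>) = (\dim U).+1.
Proof.
move=> wU; have sU := addvSl U <[w]>.
have : (\dim U < \dim (U + <[w]>))%N.
  by rewrite (ltn_leqif (dimv_leqif_sup sU)) subv_add subvv -memvE wU.
have := (dimv_add_leqif U <[w]>).1; rewrite dim_vline; case: (w != 0); lia.
Qed.

Lemma exists_subv_dim U W k : (U <= W)%VS -> (\dim U <= k <= \dim W)%N ->
  exists2 V, (U <= V)%VS && (V <= W)%VS & \dim V = k.
Proof.
move=> sUW /andP[leUk lekW]; have [d def_k] : exists d, k = (\dim U + d)%N.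
  by exists (k - \dim U)%N; lia.
subst k.
elim: d U sUW {leUk} lekW => [|d IHd] U sUW leUdW.
  by exists U; rewrite ?subvv ?sUW ?addn0.
have /subvPn[w Ww wU] : ~~ (W <= U)%VS.
  by apply: contraTN leUdW => /dimvS; lia.
have [||V /andP[sUwV sVW] dimV] := IHd (U + <[w]>)%VS.
- by rewrite subv_add sUW -memvE.
- by rewrite dimv_add_line_notin //; lia.
exists V; last by rewrite dimV dimv_add_line_notin ?addSnnS.
by rewrite sVW (subv_trans (addvSl U <[w]>) sUwV).
Qed.

Lemma dimv_bigcap_ge (I : Type) (r : seq I) (Us : I -> {vspace vT}) :
  (forall i, \dim {:vT} - 1 <= \dim (Us i))%N ->
  (\dim {:vT} - size r <= \dim (\bigcap_(i <- r) Us i))%N.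
Proof.
move=> dimUs; elim: r => [|i r IHr]; first by rewrite big_nil subn0.
rewrite big_cons [size _]/=.
have := dimv_sum_cap (Us i) (\bigcap_(j <- r) Us j).
have := dimvS (subvf (Us i + \bigcap_(j <- r) Us j)); have := dimUs i; lia.
Qed.

Lemma eq_point_of_mem (P Q : {vspace vT}) (v : vT) :
  is_point P -> is_point Q -> v != 0 -> v \in P -> v \in Q -> P = Q.
Proof.
move=> dimP dimQ v0 vP vQ.
suff line_eq R : is_point R -> v \in R -> R = <[v]>%VS.
  by rewrite (line_eq P dimP vP) (line_eq Q dimQ vQ).
move=> dimR vR; apply/esym/eqP; rewrite eqEdim -memvE vR.
by rewrite dimR dim_vline v0.
Qed.

End Subspaces.

Lemma blocking_set_ext (K : fieldType) (vT : vectType K)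
    (B1 B2 : {vspace vT} -> Prop) d :
  (forall P, B1 P <-> B2 P) -> blocking_set B1 d -> blocking_set B2 d.
Proof.
move=> eqB [B1pt B1blk]; split=> [P /eqB/B1pt // | S dimS].
by have [P [/eqB B2P sPS]] := B1blk S dimS; exists P.
Qed.

Section MinimalLines.
Variables (K : finFieldType) (vT : vectType K).
Local Notation fvT := (finvect_type vT).

(* Point sets are presented as the lines spanned by a finite set of vectors,
   so that a minimal blocking subset can be extracted with [minset_exists]. *)
Definition lines (A : {set fvT}) (P : {vspace vT}) : Prop :=
  exists2 v : fvT, v \in A & P = <[v : vT]>%VS.

Lemma exists_minimal_blocking_lines (A : {set fvT}) d :
  blocking_set (lines A) d ->
  exists2 A' : {set fvT}, A' \subset A & minimal_blocking_set (lines A') d.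
Proof.
move=> blkA; have [A' minA' sA'A] :=
  minset_exists (P := [pred X | `[< blocking_set (lines X) d >]]) (asboolT blkA).
have /asboolP blkA' := minsetp minA'.
exists A' => //; split => // B sBA' blkB P.
pose A'' := [set v in A' | `[< B <[v : vT]>%VS >]].
have eqB Q : B Q <-> lines A'' Q.
  split=> [BQ | [v]]; last by rewrite inE => /andP[_ /asboolP BQ] ->.
  by have [v vA' defQ] := sBA' Q BQ; exists v; rewrite // inE vA' -defQ asboolT.
have <- : A'' = A'.
  apply: minsetinf minA' _ _; last by apply/subsetP => v /[!inE]/andP[].
  exact/asboolP/(blocking_set_ext eqB).
by move=> /eqB.
Qed.

End MinimalLines.

Section FieldReduction.
Variables (F : finFieldType) (L : fieldExtType F) (n : nat).
Local Notation VF := (VF L n).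
Local Notation VL := (VL L n).
Local Notation t := (\dim {:L}).
Implicit Types (U V : {vspace VL}) (S W Z : {vspace VF}).

Lemma scaleVF (c : F) (x : VF) : (c *: x : VF) = ((c%:A : L) *: (x : VL) : VL).
Proof. by apply/ffunP => i; rewrite !ffunE -[LHS]mulr_algl. Qed.

Lemma dimVF : \dim {:VF} = (n * t)%N.
Proof. by rewrite dimvf /dim /= dimvf card_ord. Qed.

Lemma dimVL : \dim {:VL} = n.
Proof. by rewrite dimvf /dim /= card_ord muln1. Qed.

Definition lmul (l : L) (x : VF) : VF := (l *: (x : VL) : VL).

Lemma lmulA l m x : lmul l (lmul m x) = lmul (l * m) x.
Proof. by apply/ffunP => i; rewrite !ffunE scalerA. Qed.

Lemma lmul1 x : lmul 1 x = x.
Proof. by apply/ffunP => i; rewrite !ffunE scale1r. Qed.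

Lemma lmul_is_linear l : linear (lmul l).
Proof. by move=> c x y; rewrite /lmul !scaleVF scalerDr !scalerA mulrC. Qed.
HB.instance Definition _ l :=
  GRing.isLinear.Build F VF VF _ (lmul l) (lmul_is_linear l).

Definition lorbit (x : VF) (l : L) : VF := lmul l x.

Lemma lorbit_is_linear x : linear (lorbit x).
Proof.
move=> c l m; rewrite /lorbit /lmul scaleVF scalerDl scalerA.
by rewrite mulr_algl.
Qed.
HB.instance Definition _ x :=
  GRing.isLinear.Build F L VF _ (lorbit x) (lorbit_is_linear x).

Let eL := vbasis {:L}.

Definition base_space (U : {vspace VL}) : {vspace VF} :=
  <<[seq lmul e b | e <- eL, b <- vbasis U]>>%VS.

Lemma memVL_sum (U : {vspace VL}) (I : Type) (r : seq I) (f : I -> VF) :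
  (forall i, (f i : VL) \in U) -> ((\sum_(i <- r) f i : VF) : VL) \in U.
Proof.
move=> fU; apply: (big_ind (fun y : VF => (y : VL) \in U)) => //.
- exact: mem0v.
- by move=> x y xU yU; apply: memvD.
Qed.

Lemma memVF_sum (W : {vspace VF}) (I : Type) (r : seq I) (f : I -> VL) :
  (forall i, (f i : VF) \in W) -> ((\sum_(i <- r) f i : VL) : VF) \in W.
Proof.
move=> fW; apply: (big_ind (fun y : VL => (y : VF) \in W)) => //.
- exact: mem0v.
- by move=> x y xW yW; apply: memvD.
Qed.

Lemma mem_base_space U x : (x \in base_space U) = ((x : VL) \in U).
Proof.
apply/idP/idP.
- move/(coord_span (X := in_tuple _)) ->.
  apply: memVL_sum => i; rewrite scaleVF; apply: memvZ.
  have /allpairsP[[e b] [_ bU ->]] := mem_nth 0 (ltn_ord i).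
  by apply: memvZ; apply: vbasis_mem.
- move/coord_vbasis ->; apply: memVF_sum => j.
  rewrite [X in X *: _](@coord_vbasis _ _ _ fullv) ?memvf // scaler_suml.
  apply: memVF_sum => i; rewrite -mulr_algl -scalerA -scaleVF.
  by apply/memvZ/memv_span/allpairsP; exists (eL`_i, (vbasis U)`_j);
    rewrite !mem_nth ?size_tuple.
Qed.

Lemma base_spaceS U V : (U <= V)%VS -> (base_space U <= base_space V)%VS.
Proof.
by move=> sUV; apply/subvP => x; rewrite !mem_base_space; apply: (subvP sUV).
Qed.

Lemma dim_base_space U : \dim (base_space U) = (t * \dim U)%N.
Proof.
have le_dim V : (\dim (base_space V) <= t * \dim V)%N.
  by apply: leq_trans (dim_span _) _; rewrite size_allpairs !size_tuple.
have full : (fullv <= base_space U + base_space U^C%VS)%VS.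
  apply/subvP => x _.
  have : (x : VL) \in (U + U^C)%VS by rewrite addv_complf memvf.
  case/memv_addP => u uU [w wUC defx]; rewrite (_ : x = (u : VF) + (w : VF)) //.
  by apply: memv_add; rewrite mem_base_space.
have := dimvS full; rewrite dimVF.
have := (dimv_add_leqif (base_space U) (base_space U^C%VS)).1.
have := le_dim U^C%VS; rewrite dimv_compl dimVL.
have := dimvS (subvf U); have := le_dim U; rewrite dimVL.
nia.
Qed.

Lemma dim_lmul_preim l Z :
  l != 0 -> (\dim Z <= \dim (linfun (lmul l) @^-1: Z))%N.
Proof.
move=> l0; have Zimg : (Z <= limg (linfun (lmul l)))%VS.
  apply/subvP => x _; apply/memv_imgP; exists (lmul l^-1 x); rewrite ?memvf //.
  by rewrite lfunE /= lmulA mulfV ?lmul1.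
have := limg_ker_dim (linfun (lmul l)) (linfun (lmul l) @^-1: Z)%VS.
by rewrite lpreimK // => <-; apply: leq_addl.
Qed.

Definition ext_core (Z : {vspace VF}) : {vspace VF} :=
  (\bigcap_(i < t) (linfun (lmul eL`_i) @^-1: Z))%VS.

Lemma mem_ext_core Z x l : x \in ext_core Z -> lmul l x \in Z.
Proof.
move=> xZ; have eLxZ (i : 'I_t) : lmul eL`_i x \in Z.
  rewrite -(lfunE (lmul _)) memv_preim.
  exact: subvP (bigcapv_inf i (erefl true) (subvv _)) x xZ.
rewrite (coord_vbasis (memvf l)) -/(lorbit x _) linear_sum.
by apply: rpred_sum => i _; rewrite linearZ; apply/rpredZ/eLxZ.
Qed.

Lemma dim_ext_core Z :
  \dim Z = (n * t - 1)%N -> (n * t - t <= \dim (ext_core Z))%N.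
Proof.
move=> dimZ; have := @dimv_bigcap_ge _ _ _ (index_enum 'I_t)
  (fun i => linfun (lmul eL`_i) @^-1: Z)%VS.
have -> : size (index_enum 'I_t) = t by rewrite -[RHS](card_ord t) cardT enumT.
rewrite dimVF; apply=> i; rewrite -dimZ; apply: dim_lmul_preim.
by apply: (free_not0 (basis_free (vbasisP fullv))); rewrite mem_nth ?size_tuple.
Qed.

Definition ext_span (W : {vspace VF}) : {vspace VL} :=
  <<(vbasis W : seq VF) : seq VL>>%VS.

Lemma mem_ext_span W x : x \in W -> (x : VL) \in ext_span W.
Proof.
move/coord_vbasis ->; apply: memVL_sum => i; rewrite scaleVF.
by apply/memvZ/memv_span; rewrite mem_nth ?size_tuple.
Qed.

Lemma dim_ext_span W : (\dim W <= t * \dim (ext_span W))%N.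
Proof.
rewrite -dim_base_space; apply: dimvS; apply/subvP => x xW.
by rewrite mem_base_space mem_ext_span.
Qed.

Lemma base_ext_span_core Z : (base_space (ext_span (ext_core Z)) <= Z)%VS.
Proof.
apply/subvP => x; rewrite mem_base_space.
move/(coord_span (X := in_tuple ((vbasis _ : seq VF) : seq VL))) ->.
apply: memVF_sum => i; rewrite -[X in X \in Z]/(lmul _ _).
by apply/mem_ext_core/vbasis_mem/mem_nth/ltn_ord.
Qed.

Lemma exists_ext_hyperplane_sub Z : \dim Z = (n * t - 1)%N ->
  exists2 H : {vspace VL}, \dim H = (n - 1)%N & (base_space H <= Z)%VS.
Proof.
move=> dimZ; exists (ext_span (ext_core Z)); last exact: base_ext_span_core.
have := dim_ext_span (ext_core Z); have := dim_ext_core dimZ.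
have := dimvS (base_ext_span_core Z); rewrite dim_base_space dimZ.
have : (0 < t)%N by rewrite adim_gt0.
nia.
Qed.

Lemma field_red_B_blocking (B' : {vspace VF} -> Prop) :
  blocking_set B' (n * t - t) -> blocking_set (field_red_B B') (n - 1).
Proof.
move=> [B'pt B'blk]; split=> [P [] // | H dimH].
have [|P' [B'P' sP'H]] := B'blk (base_space H).
  by rewrite dim_base_space dimH mulnBr muln1 mulnC.
have u0 : vpick P' != 0 by rewrite vpick0 -dimv_eq0 B'pt.
have uP' := memv_pick P'.
exists <[vpick P' : VL]>%VS; split; last first.
  by rewrite -memvE -mem_base_space (subvP sP'H).
split; first by rewrite /is_point dim_vline u0.
by exists P'; split=> //; exists (vpick P'); rewrite u0 uP' memv_line.
Qed.

Lemma blocking_meets_base_space (B : {vspace VL} -> Prop) (S : {vspace VF}) :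
  (0 < n)%N -> blocking_set B (n - 1) -> \dim S = (n * t - t)%N ->
  exists2 w : VF, (w != 0) && (w \in S) & exists2 P, B P & (w : VL) \in P.
Proof.
move=> n_gt0 [Bpt Bblk] dimS; have t_gt0 : (0 < t)%N by rewrite adim_gt0.
have [|Z /andP[sSZ _] dimZ] := exists_subv_dim (k := (n * t - 1)%N) (subvf S).
  by rewrite dimS dimVF; apply/andP; split; nia.
have [H dimH sHZ] := exists_ext_hyperplane_sub dimZ.
have [P [BP sPH]] := Bblk H dimH.
have sPZ := subv_trans (base_spaceS sPH) sHZ.
have : (0 < \dim (base_space P :&: S))%N.
  have := dimv_sum_cap (base_space P) S; rewrite dim_base_space Bpt //.
  have : (base_space P + S <= Z)%VS by rewrite subv_add sPZ sSZ.
  by move/dimvS; rewrite dimZ dimS; nia.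
rewrite lt0n dimv_eq0 -vpick0 => w0.
have /memv_capP[wP wS] := memv_pick (base_space P :&: S).
exists (vpick (base_space P :&: S)); first by rewrite w0.
by exists P; rewrite // -mem_base_space.
Qed.

Definition spread_vectors (B : {vspace VL} -> Prop) : {set finvect_type VF} :=
  [set v : finvect_type VF |
    (v != 0) && `[< exists2 P, B P & (v : VL) \in P >]].

Lemma spread_lines_blocking (B : {vspace VL} -> Prop) :
  (0 < n)%N -> blocking_set B (n - 1) ->
  blocking_set (lines (spread_vectors B)) (n * t - t).
Proof.
move=> n_gt0 blkB; split=> [P [v] | S dimS].
  by rewrite inE => /andP[v0 _] ->; rewrite /is_point dim_vline v0.
have [w /andP[w0 wS] BwP] := blocking_meets_base_space n_gt0 blkB dimS.
exists <[w]>%VS; split; last by rewrite -memvE.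
by exists w; rewrite // inE w0 asboolT.
Qed.

Lemma field_red_spread_lines_sub (B : {vspace VL} -> Prop)
    (A : {set finvect_type VF}) :
  (forall P, B P -> is_point P) -> A \subset spread_vectors B ->
  forall P, field_red_B (lines A) P -> B P.
Proof.
move=> Bpt sAB P [Ppt [_ [[u uA ->] [v [v0 [vu vP]]]]]].
have /[!inE]/andP[_ /asboolP[Q BQ uQ]] := subsetP sAB u uA.
have vQ : (v : VL) \in Q by case/vlineP: vu => c ->; rewrite scaleVF memvZ.
by rewrite (eq_point_of_mem Ppt (Bpt Q BQ) v0 vP vQ).
Qed.

End FieldReduction.

Theorem theorem5p1 (F : finFieldType) (L : fieldExtType F) (n : nat) :
  (2 <= n)%N ->
  forall B : {vspace VL L n} -> Prop,
    minimal_blocking_set B (n - 1) ->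
    exists B' : {vspace VF L n} -> Prop,
      minimal_blocking_set B' (n * \dim {:L} - \dim {:L}) /\
      (forall P : {vspace VL L n}, B P <-> field_red_B B' P).
Proof.
move=> n_ge2 B [blkB minB]; have n_gt0 : (0 < n)%N by apply: ltnW.
have [A sAB minA] :=
  exists_minimal_blocking_lines (spread_lines_blocking n_gt0 blkB).
have redA_sub := field_red_spread_lines_sub blkB.1 sAB.
exists (lines A); split=> // P; split=> [BP | /redA_sub //].
exact: minB _ redA_sub (field_red_B_blocking minA.1) P BP.
Qed.
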